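(* Under the hypotheses of the Point SAGA convergence theorem (each $f_i$ differentiable and $\mu$-strongly convex with $\mu>0$, and the Point-SAGA similarity bound with constant $\nu>0$), run Point SAGA with stepsize $\gamma=\frac{1}{\nu^2/\mu+(n-1)\mu}$ and let $\Psi_k:=\|x_k-x_\star\|^2+\gamma\mu\sum_{i=1}^n\|w_k^i-x_\star\|^2$. Then for any $\varepsilon>0$, $$k\ge\left(n+\frac{\nu^2}{\mu^2}\right)\log\left(\frac{\Psi_0}{\varepsilon}\right)\quad\Longrightarrow\quad\mathbb{E}[\Psi_k]\le\varepsilon.$$
   Context: Setting: $f(x)=\frac1n\sum_{i=1}^nf_i(x)$, $x_\star$ its minimizer. Point-SAGA similarity bound: for all $x^1,\dots,x^n\in\mathbb{R}^d$, $\frac1n\sum_{j=1}^n\|\nabla f_j(x^j)-\frac1n\sum_{i=1}^n\nabla f_i(x^i)-\nabla f_j(x_\star)\|^2\le\nu^2\frac1n\sum_{j=1}^n\|x^j-x_\star\|^2$. Point SAGA: parameters $\gamma>0$, $x_0,w_0^1,\dots,w_0^n\in\mathbb{R}^d$. For $k\ge0$: sample $i_k$ uniformly from $[n]$ independently; $h_k=\nabla f_{i_k}(w_k^{i_k})-\frac1n\sum_{j=1}^n\nabla f_j(w_k^j)$; $x_{k+1}=\operatorname{prox}_{\gamma f_{i_k}}(x_k+\gamma h_k)$; $w_{k+1}^{i_k}=x_{k+1}$, $w_{k+1}^j=w_k^j$ for $j\ne i_k$. $\operatorname{prox}_{\gamma\phi}(y):=\arg\min_x\{\phi(x)+\frac1{2\gamma}\|x-y\|^2\}$.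 *)

From HB Require Import structures.
From mathcomp Require Import all_boot all_order all_algebra.
From mathcomp Require Import all_classical all_reals all_analysis.
Set Implicit Arguments. Unset Strict Implicit. Unset Printing Implicit Defensive.
Import Order.TTheory GRing.Theory Num.Theory.
Import numFieldNormedType.Exports.
Local Open Scope ring_scope.
Local Open Scope classical_set_scope.

Section PointSAGA.
Variables (R : realType) (d : nat).
Notation vec := 'rV[R]_d.

Definition dotv (u v : vec) : R := \sum_(j < d) u ord0 j * v ord0 j.
Definition sqnorm (v : vec) : R := dotv v v.

Definition grad (f : vec -> R^o) (x : vec) : vec :=
  \row_(j < d) ('d f x) (delta_mx ord0 j : vec).

Definition strongly_convex (mu : R) (f : vec -> R) : Prop :=
  forall (x y : vec) (t : R), 0 <= t <= 1 ->
    f (t *: x + (1 - t) *: y) <=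
      t * f x + (1 - t) * f y - mu / 2 * t * (1 - t) * sqnorm (x - y).

(* prox_{gamma phi}(y) := argmin_x { phi x + 1/(2 gamma) ||x - y||^2 }
   (a minimizer chosen by classical choice; under strong convexity it
   exists and is unique) *)
Definition prox (gamma : R) (phi : vec -> R) (y : vec) : vec :=
  xget y [set x | forall z : vec,
      phi x + (2 * gamma)^-1 * sqnorm (x - y) <=
      phi z + (2 * gamma)^-1 * sqnorm (z - y)].

Variable n : nat.
Variable fs : 'I_n -> vec -> R^o.

Definition psaga_step (gamma : R) (st : vec * ('I_n -> vec)) (i : 'I_n)
  : vec * ('I_n -> vec) :=
  let: (x, w) := st in
  let h := grad (fs i) (w i) - n%:R^-1 *: \sum_(j < n) grad (fs j) (w j) in
  let x' := prox gamma (fs i) (x + gamma *: h) in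
  (x', fun j => if j == i then x' else w j).

Definition psaga_run (gamma : R) (x0 : vec) (w0 : 'I_n -> vec) (s : seq 'I_n)
  : vec * ('I_n -> vec) := foldl (psaga_step gamma) (x0, w0) s.

Definition Psi (gamma mu : R) (xs : vec) (st : vec * ('I_n -> vec)) : R :=
  sqnorm (st.1 - xs) + gamma * mu * \sum_(i < n) sqnorm (st.2 i - xs).

(* E[Psi_k]: i_0..i_{k-1} i.i.d. uniform on [n], i.e. uniform over 'I_n^k *)
Definition expected_Psi (gamma mu : R) (xs x0 : vec) (w0 : 'I_n -> vec)
  (k : nat) : R :=
  (n%:R ^+ k)^-1 *
    \sum_(s : k.-tuple 'I_n) Psi gamma mu xs (psaga_run gamma x0 w0 s).

End PointSAGA.

(* The prox step is an implicit gradient step: its optimality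
   condition [x' + gamma grad f_i x' = x + gamma h] and the mu-strong
   monotonicity of [grad f_i] give
     (1 + gamma mu)^2 |x' - xs|^2 <= |x - xs + gamma (h - grad f_i xs)|^2.
   Averaged over [i], the cross term vanishes because the vectors
   [h - grad f_i xs] sum to zero (the similarity bound at [w = xs] forces
   [sum_i grad f_i xs = 0]), while the similarity bound controls their mean
   square by [nu^2] times the mean of [|w^j - xs|^2].  For the chosen [gamma]
   this yields [E[Psi_{k+1}] <= (1 + gamma mu)^-1 E[Psi_k]], and
   [(1 + gamma mu)^-1 = 1 - 1/(n + nu^2/mu^2) <= exp (-1/(n + nu^2/mu^2))]. *)

From HB Require Import structures.
From mathcomp Require Import all_boot all_order all_algebra.
From mathcomp Require Import all_classical all_reals all_analysis.
From mathcomp Require Import ring lra.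
Import Order.TTheory GRing.Theory Num.Theory.
Import numFieldNormedType.Exports.
Local Open Scope ring_scope.
Local Open Scope classical_set_scope.
Set Implicit Arguments. Unset Strict Implicit.

Section Euclid.
Variables (R : realType) (d : nat).
Notation vec := 'rV[R]_d.
Implicit Types u v w : vec.

Lemma dotvC u v : dotv u v = dotv v u.
Proof. by apply: eq_bigr => j _; rewrite mulrC. Qed.

Lemma dotvDl u v w : dotv (u + v) w = dotv u w + dotv v w.
Proof. by rewrite /dotv -big_split; apply: eq_bigr => j _; rewrite mxE mulrDl. Qed.

Lemma dotvZl (a : R) u w : dotv (a *: u) w = a * dotv u w.
Proof. by rewrite /dotv mulr_sumr; apply: eq_bigr => j _; rewrite mxE mulrA. Qed.

Lemma dotvNl u w : dotv (- u) w = - dotv u w.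
Proof. by rewrite -scaleN1r dotvZl mulN1r. Qed.

Lemma dotvBl u v w : dotv (u - v) w = dotv u w - dotv v w.
Proof. by rewrite dotvDl dotvNl. Qed.

Lemma dotvDr u v w : dotv w (u + v) = dotv w u + dotv w v.
Proof. by rewrite dotvC dotvDl !(dotvC w). Qed.

Lemma dotvZr (a : R) u w : dotv w (a *: u) = a * dotv w u.
Proof. by rewrite dotvC dotvZl dotvC. Qed.

Lemma dotvNr u w : dotv w (- u) = - dotv w u.
Proof. by rewrite dotvC dotvNl dotvC. Qed.

Lemma dotv0l w : dotv 0 w = 0.
Proof. by rewrite /dotv big1 // => j _; rewrite mxE mul0r. Qed.

Lemma dotv_suml (I : finType) (F : I -> vec) w :
  dotv (\sum_i F i) w = \sum_i dotv (F i) w.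
Proof. by elim/big_rec2: _ => [|i y1 y2 _ <-]; rewrite ?dotv0l ?dotvDl. Qed.

Lemma sqnorm_ge0 u : 0 <= sqnorm u.
Proof. by apply: sumr_ge0 => j _; rewrite -expr2 sqr_ge0. Qed.

Lemma sqnormD u v : sqnorm (u + v) = sqnorm u + 2 * dotv u v + sqnorm v.
Proof. rewrite /sqnorm dotvDl !dotvDr (dotvC v u); ring. Qed.

Lemma sqnormB u v : sqnorm (u - v) = sqnorm u - 2 * dotv u v + sqnorm v.
Proof. by rewrite sqnormD dotvNr /sqnorm dotvNl dotvNr opprK mulrN. Qed.

Lemma sqnormN u : sqnorm (- u) = sqnorm u.
Proof. by rewrite /sqnorm dotvNl dotvNr opprK. Qed.

Lemma sqnormZ (a : R) u : sqnorm (a *: u) = a ^+ 2 * sqnorm u.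
Proof. by rewrite /sqnorm dotvZl dotvZr mulrA expr2. Qed.

Lemma sqr_coord_le_sqnorm u j : u ord0 j ^+ 2 <= sqnorm u.
Proof.
rewrite /sqnorm /dotv (bigD1 j) //= -expr2 lerDl.
by apply: sumr_ge0 => i _; rewrite -expr2 sqr_ge0.
Qed.

Lemma sqnorm_le0 u : sqnorm u <= 0 -> u = 0.
Proof.
move=> u_le0; apply/rowP => j; rewrite mxE.
have sq_le0 : u ord0 j ^+ 2 <= 0 by apply: le_trans (sqr_coord_le_sqnorm u j) u_le0.
have /eqP : u ord0 j ^+ 2 = 0 by apply/eqP; rewrite eq_le sq_le0 sqr_ge0.
by rewrite sqrf_eq0 => /eqP.
Qed.

Lemma dotv_ge_young u v (k : R) : 0 < k ->
  - (sqnorm u / (2 * k)) - k / 2 * sqnorm v <= dotv u v.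
Proof.
move=> k_gt0.
have := sqnorm_ge0 (u + k *: v); rewrite sqnormD sqnormZ dotvZr => sq_ge0.
have -> : - (sqnorm u / (2 * k)) - k / 2 * sqnorm v =
    dotv u v - (sqnorm u + 2 * (k * dotv u v) + k ^+ 2 * sqnorm v) / (2 * k).
  by field; rewrite gt_eqF.
by rewrite lerBlDr lerDl divr_ge0 // mulr_ge0 // ltW.
Qed.

Lemma sqnorm_gt_off_box u v (r : R) j : 1 <= r ->
  ~~ (v ord0 j - r <= u ord0 j <= v ord0 j + r) -> r < sqnorm (u - v).
Proof.
move=> r_ge1 off; apply: lt_le_trans (sqr_coord_le_sqnorm _ j); rewrite !mxE.
by move: off; rewrite negb_and -!ltNge => /orP[]; nra.
Qed.

Lemma continuous_sum (T : topologicalType) (I : Type) (s : seq I)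
    (F : I -> T -> R) :
  (forall i, continuous (F i)) -> continuous (fun x => \sum_(i <- s) F i x).
Proof.
move=> F_cont; elim: s => [|i s IH] x.
  by under eq_fun do rewrite big_nil; exact: cst_continuous.
by under eq_fun do rewrite big_cons; apply: continuousD; [exact: F_cont|exact: IH].
Qed.

Lemma sqnormB_continuous v : continuous (fun u : vec => sqnorm (u - v)).
Proof.
apply: continuous_sum => j u.
have coord_cont : {for u, continuous (fun u : vec => (u - v) ord0 j)}.
  have -> : (fun u : vec => (u - v) ord0 j) = (fun u => u ord0 j - v ord0 j).
    by apply: funext => w; rewrite !mxE.
  by apply: continuousB; [exact: coord_continuous|exact: cst_continuous].
exact: (continuousM coord_cont coord_cont).
Qed.

Lemma sum_sqnorm_add_centered (I : finType) (a : vec) (g : I -> vec) (c : R) :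
  \sum_i g i = 0 ->
  \sum_i sqnorm (a + c *: g i) = #|I|%:R * sqnorm a + c ^+ 2 * \sum_i sqnorm (g i).
Proof.
move=> g_sum0.
under eq_bigr do rewrite sqnormD sqnormZ dotvZr.
rewrite !big_split /= sumr_const mulr_natl -!mulr_sumr.
have -> : \sum_i dotv a (g i) = 0.
  by under eq_bigr do rewrite dotvC; rewrite -dotv_suml g_sum0 dotv0l.
by rewrite !mulr0 addr0.
Qed.

Lemma sum_sqnorm_update (I : finType) (w : I -> vec) (i : I) (y z : vec) :
  \sum_j sqnorm ((if j == i then y else w j) - z) =
  \sum_j sqnorm (w j - z) - sqnorm (w i - z) + sqnorm (y - z).
Proof.
rewrite (bigD1 i) //= eqxx [in RHS](bigD1 i) //=.
under eq_bigr => j /negbTE -> do [].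
by rewrite [sqnorm (w i - z) + _]addrC addrK addrC.
Qed.

End Euclid.

Section Gradient.
Variables (R : realType) (d : nat).
Notation vec := 'rV[R]_d.
Implicit Types (f : vec -> R^o) (x v z : vec).

Lemma derive_grad f x v : differentiable f x -> 'D_v f x = dotv (grad f x) v.
Proof.
move=> df; rewrite deriveE // {1}(matrix_sum_delta v) big_ord1 linear_sum.
by apply: eq_bigr => j _; rewrite linearZ /= mxE mulrC.
Qed.

Lemma diff_quotient_cvg f x v : differentiable f x ->
  (fun t : R => t^-1 * (f (x + t *: v) - f x)) @ 0^'+ --> dotv (grad f x) v.
Proof.
move=> df; rewrite -derive_grad //.
have -> : (fun t : R => t^-1 * (f (x + t *: v) - f x)) =
          (fun t : R => t^-1 *: ((f \o shift x) (t *: v) - f x)).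
  by apply: funext => t; rewrite /= [x + _]addrC.
exact: cvg_dnbhs_at_right (diff_derivable df).
Qed.

Lemma affine_cvg_at_right (a b : R) : (fun t : R => a + t * b) @ 0^'+ --> a.
Proof.
apply: cvg_at_right_filter; rewrite -[X in _ --> X]addr0 -[X in _ + X](mul0r b).
by apply: cvgD; [exact: cvg_cst | apply: cvgMl; exact: cvg_id].
Qed.

Lemma grad_dotv_le f x v (a b : R) : differentiable f x ->
  (forall t, 0 < t -> t <= 1 -> f (x + t *: v) - f x <= t * a + t ^+ 2 * b) ->
  dotv (grad f x) v <= a.
Proof.
move=> df incr_le.
apply: ler_cvg_to (diff_quotient_cvg (v := v) df) (@affine_cvg_at_right a b) _.
near=> t; have t_gt0 : 0 < t by near: t; exact: nbhs_right_gt.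
rewrite ler_pdivrMl // mulrDr mulrA -expr2.
by apply: incr_le => //; near: t; exact: nbhs_right_le.
Unshelve. all: by end_near.
Qed.

Lemma grad_dotv_ge f x v (a b : R) : differentiable f x ->
  (forall t, 0 < t -> t <= 1 -> t * a - t ^+ 2 * b <= f (x + t *: v) - f x) ->
  a <= dotv (grad f x) v.
Proof.
move=> df incr_ge.
apply: ler_cvg_to (@affine_cvg_at_right a (- b)) (diff_quotient_cvg (v := v) df) _.
near=> t; have t_gt0 : 0 < t by near: t; exact: nbhs_right_gt.
rewrite ler_pdivlMl // mulrDr mulrA -expr2 mulrN.
by apply: incr_ge => //; near: t; exact: nbhs_right_le.
Unshelve. all: by end_near.
Qed.

Lemma strongly_convex_grad_ge (mu : R) f x z : strongly_convex mu f ->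
  differentiable f x ->
  f x + dotv (grad f x) (z - x) + mu / 2 * sqnorm (z - x) <= f z.
Proof.
move=> f_sc df.
suff : dotv (grad f x) (z - x) <= f z - f x - mu / 2 * sqnorm (z - x) by lra.
apply: (grad_dotv_le (b := mu / 2 * sqnorm (z - x)) df) => t t_gt0 t_le1.
have := f_sc z x t; rewrite (ltW t_gt0) t_le1 => /(_ isT).
have -> : t *: z + (1 - t) *: x = x + t *: (z - x).
  by apply/rowP => j; rewrite !mxE; ring.
set S := sqnorm _ => conv_le.
have -> : t * (f z - f x - mu / 2 * S) + t ^+ 2 * (mu / 2 * S) =
          t * f z + (1 - t) * f x - mu / 2 * t * (1 - t) * S - f x by ring.
by rewrite lerD2r.
Qed.

Lemma strongly_convex_grad_mono (mu : R) f x z : strongly_convex mu f ->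
  differentiable f x -> differentiable f z ->
  mu * sqnorm (x - z) <= dotv (grad f x - grad f z) (x - z).
Proof.
move=> f_sc dx dz.
have sum_ineq (A B S P Q : R) :
  A - P + mu / 2 * S <= B -> B + Q + mu / 2 * S <= A -> mu * S <= P - Q by lra.
have gex := strongly_convex_grad_ge z f_sc dx.
have gez := strongly_convex_grad_ge x f_sc dz.
have zx_xz : z - x = - (x - z) by rewrite opprB.
rewrite zx_xz sqnormN dotvNr in gex.
by rewrite dotvBl; exact: sum_ineq gex gez.
Qed.

End Gradient.

Section Prox.
Variables (R : realType) (d : nat) (mu gamma : R) (f : 'rV[R]_d -> R^o).
Notation vec := 'rV[R]_d.
Hypotheses (mu_ge0 : 0 <= mu) (gamma_gt0 : 0 < gamma).
Hypotheses (f_sc : strongly_convex mu f) (f_diff : forall x, differentiable f x).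

Let c := (2 * gamma)^-1.
Let k := mu / 2 + c.

Let c_gt0 : 0 < c. Proof. by rewrite invr_gt0 mulr_gt0. Qed.
Let k_gt0 : 0 < k. Proof. by rewrite ltr_wpDl // divr_ge0. Qed.

Lemma prox_objective_ge (y z : vec) :
  f y - sqnorm (grad f y) / (2 * k) + k / 2 * sqnorm (z - y) <=
  f z + c * sqnorm (z - y).
Proof.
have := strongly_convex_grad_ge z f_sc (f_diff y).
have := dotv_ge_young (grad f y) (z - y) k_gt0.
set S := sqnorm (z - y); set D := dotv _ _; set G := sqnorm _ / _.
have : k * S = mu / 2 * S + c * S by rewrite -mulrDl.
lra.
Qed.

Lemma prox_objective_ge_far (y z : vec) :
  sqnorm (grad f y) / k ^+ 2 < sqnorm (z - y) -> f y <= f z + c * sqnorm (z - y).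
Proof.
move=> far; apply: le_trans (prox_objective_ge y z).
have -> : sqnorm (grad f y) / (2 * k) = k / 2 * (sqnorm (grad f y) / k ^+ 2).
  by field; rewrite gt_eqF.
by rewrite -addrA lerDl addrC subr_ge0 ler_wpM2l ?divr_ge0 ?ltW // ltW.
Qed.

(* Far from [y] the objective exceeds its value at [y], so it suffices to
   minimize it over a compact box around [y]. *)
Lemma prox_objective_has_min (y : vec) : exists x : vec, forall z : vec,
  f x + c * sqnorm (x - y) <= f z + c * sqnorm (z - y).
Proof.
pose G z := f z + c * sqnorm (z - y).
pose r := sqnorm (grad f y) / k ^+ 2 + 1.
have r_ge1 : 1 <= r by rewrite lerDr divr_ge0 ?sqnorm_ge0 ?exprn_ge0 ?ltW.
pose box := [set u : vec | forall j, `[y ord0 j - r, y ord0 j + r] (u ord0 j)].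
have box_compact : compact box.
  by have := @rV_compact _ d (fun j => `[y ord0 j - r, y ord0 j + r]%classic)
    (fun j => @segment_compact _ _ _).
have box_y : box y.
  have r_ge0 : 0 <= r by apply: le_trans r_ge1.
  by move=> j /=; rewrite in_itv /= lerBlDr !lerDl r_ge0.
have G_cont : continuous G.
  move=> z; apply: (@continuousD _ R^o _ f (fun z => c * sqnorm (z - y))).
    exact: differentiable_continuous.
  by apply: continuousM; [exact: cst_continuous | exact: sqnormB_continuous].
have [x box_x x_min] :=
  EVT_min_rV (ex_intro _ y box_y) box_compact (continuous_subspaceT G_cont).
exists x => z; have [box_z|] := pselect (box z); first by apply: x_min; rewrite inE.
move=> /existsNP[j /= off_j].
have far : r < sqnorm (z - y).
  apply: (sqnorm_gt_off_box (j := j) r_ge1); apply/negP => in_j.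
  by apply: off_j; rewrite in_itv.
have Gx_le : G x <= G y by apply: x_min; rewrite inE.
apply: le_trans Gx_le _; rewrite /G subrr /sqnorm dotv0l mulr0 addr0.
by apply: prox_objective_ge_far; apply: lt_trans far; rewrite ltrDl.
Qed.

Lemma prox_min (y z : vec) :
  f (prox gamma f y) + c * sqnorm (prox gamma f y - y) <= f z + c * sqnorm (z - y).
Proof. exact: (xgetPex y (prox_objective_has_min y)). Qed.

Lemma prox_optimality (y : vec) : prox gamma f y + gamma *: grad f (prox gamma f y) = y.
Proof.
set x := prox gamma f y.
have quad_ineq (fx fz S D V t : R) :
    fx + c * S <= fz + c * (S + 2 * (t * D) + t ^+ 2 * V) ->
    t * (- (2 * c) * D) - t ^+ 2 * (c * V) <= fz - fx by move=> ?; nra.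
have grad_ge v : - (2 * c) * dotv (x - y) v <= dotv (grad f x) v.
  apply: (grad_dotv_ge (b := c * sqnorm v) (f_diff x)) => t _ _.
  have := prox_min y (x + t *: v); rewrite -/x.
  have -> : x + t *: v - y = (x - y) + t *: v by rewrite addrAC.
  by rewrite (sqnormD (x - y)) dotvZr sqnormZ; exact: quad_ineq.
set u := x + gamma *: grad f x - y.
have u_dot_ge0 v : 0 <= dotv u v.
  have gamma_c : gamma * (2 * c) = 1 by rewrite /c; field; rewrite gt_eqF.
  rewrite /u dotvBl dotvDl dotvZl.
  have := ler_wpM2l (ltW gamma_gt0) (grad_ge v).
  rewrite mulrA mulrN gamma_c mulN1r dotvBl; lra.
apply/eqP; rewrite -subr_eq0 -/u; apply/eqP/sqnorm_le0.
by have := u_dot_ge0 (- u); rewrite dotvNr oppr_ge0.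
Qed.

End Prox.

Section PointSAGAStep.
Variables (R : realType) (d n : nat) (fs : 'I_n -> 'rV[R]_d -> R^o).
Variables (mu nu gamma : R) (xs : 'rV[R]_d).
Notation vec := 'rV[R]_d.

Definition similarity_term (w : 'I_n -> vec) (i : 'I_n) : vec :=
  grad (fs i) (w i) - n%:R^-1 *: \sum_(j < n) grad (fs j) (w j) - grad (fs i) xs.

Hypotheses (n_gt0 : (0 < n)%N) (mu_gt0 : 0 < mu) (gamma_gt0 : 0 < gamma).
Hypotheses (fs_sc : forall i, strongly_convex mu (fs i))
  (fs_diff : forall i x, differentiable (fs i) x).
Hypothesis similarity : forall w : 'I_n -> vec,
  n%:R^-1 * \sum_(j < n) sqnorm (similarity_term w j)
  <= nu ^+ 2 * (n%:R^-1 * \sum_(j < n) sqnorm (w j - xs)).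

Let n_neq0 : n%:R != 0 :> R. Proof. by rewrite pnatr_eq0 -lt0n. Qed.

Lemma sum_similarity_bound (w : 'I_n -> vec) :
  \sum_(j < n) sqnorm (similarity_term w j) <= nu ^+ 2 * \sum_(j < n) sqnorm (w j - xs).
Proof.
by have := similarity w; rewrite mulrCA ler_pM2l // invr_gt0 ltr0n.
Qed.

Lemma sum_grad_opt_eq0 : \sum_(i < n) grad (fs i) xs = 0.
Proof.
have := sum_similarity_bound (fun=> xs).
under [X in _ <= _ * X]eq_bigr do rewrite subrr /sqnorm dotv0l.
rewrite big1_eq mulr0.
under eq_bigr do rewrite /similarity_term addrAC subrr add0r sqnormN.
rewrite sumr_const card_ord pmulrn_lle0 // => /sqnorm_le0/eqP.
by rewrite scaler_eq0 invr_eq0 (negbTE n_neq0) => /eqP.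
Qed.

Lemma sum_similarity_term_eq0 (w : 'I_n -> vec) : \sum_i similarity_term w i = 0.
Proof.
rewrite /similarity_term !sumrB [X in _ - X = _]sum_grad_opt_eq0 subr0.
by rewrite sumr_const card_ord -scaler_nat scalerA mulfV // scale1r subrr.
Qed.

Lemma psaga_step_contraction (x : vec) (w : 'I_n -> vec) (i : 'I_n) :
  (1 + gamma * mu) ^+ 2 * sqnorm ((psaga_step fs gamma (x, w) i).1 - xs) <=
  sqnorm ((x - xs) + gamma *: similarity_term w i).
Proof.
have contraction (S P B : R) : mu * S <= P -> 0 <= B - 2 * (mu * P) + mu ^+ 2 * S ->
    (1 + gamma * mu) ^+ 2 * S <= S + 2 * (gamma * P) + gamma ^+ 2 * B.
  move=> PS B_ge0; have PS_ge0 : 0 <= P - mu * S by rewrite subr_ge0.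
  rewrite -subr_ge0.
  have -> : S + 2 * (gamma * P) + gamma ^+ 2 * B - (1 + gamma * mu) ^+ 2 * S =
    2 * gamma * (1 + gamma * mu) * (P - mu * S) +
    gamma ^+ 2 * (B - 2 * (mu * P) + mu ^+ 2 * S) by ring.
  have gamma_ge0 := ltW gamma_gt0; have mu_ge0 := ltW mu_gt0.
  by rewrite addr_ge0 // !mulr_ge0 // addr_ge0 // mulr_ge0.
have regroup (a b c e : vec) (t : R) : (a - b) + t *: (c - e) = (a + t *: c) - b - t *: e.
  by apply/rowP => j; rewrite !mxE; ring.
rewrite /=; set h := grad (fs i) (w i) - _.
have opt := prox_optimality (ltW mu_gt0) gamma_gt0 (fs_sc i) (fs_diff i) (x + gamma *: h).
set x' := prox gamma (fs i) _ in opt *.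
set b := grad (fs i) x' - grad (fs i) xs.
have -> : (x - xs) + gamma *: similarity_term w i = (x' - xs) + gamma *: b.
  by rewrite regroup -opt -regroup.
rewrite (sqnormD (x' - xs)) dotvZr sqnormZ; apply: contraction.
  by rewrite dotvC; exact: strongly_convex_grad_mono.
have := sqnorm_ge0 (b - mu *: (x' - xs)).
by rewrite (sqnormB b) dotvZr sqnormZ dotvC.
Qed.

Lemma psaga_step_mean_Psi :
  gamma ^+ 2 * nu ^+ 2 <= gamma * mu - (gamma * mu) ^+ 2 * (n%:R - 1) ->
  forall st : vec * ('I_n -> vec), \sum_(i < n) Psi gamma mu xs (psaga_step fs gamma st i) <=
    n%:R * (1 + gamma * mu)^-1 * Psi gamma mu xs st.
Proof.
move=> gamma_small [x w]; rewrite {2}/Psi /=.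
set a := gamma * mu; set S := \sum_(j < n) sqnorm (w j - xs).
set X := sqnorm (x - xs); set G := \sum_(j < n) sqnorm (similarity_term w j).
pose Y i := sqnorm ((psaga_step fs gamma (x, w) i).1 - xs).
have Psi_step i : Psi gamma mu xs (psaga_step fs gamma (x, w) i) =
    (1 + a) * Y i + a * (S - sqnorm (w i - xs)).
  by rewrite /Psi /Y /= sum_sqnorm_update -/S -/a; ring.
under eq_bigr do rewrite Psi_step.
rewrite big_split /= -!mulr_sumr sumrB sumr_const card_ord -/S.
have sum_Y : (1 + a) ^+ 2 * \sum_i Y i <= n%:R * X + gamma ^+ 2 * G.
  rewrite mulr_sumr -[n in n%:R]card_ord -sum_sqnorm_add_centered ?sum_similarity_term_eq0 //.
  by apply: ler_sum => i _; exact: psaga_step_contraction.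
have G_le : gamma ^+ 2 * G <= (a - a ^+ 2 * (n%:R - 1)) * S.
  apply: le_trans (ler_wpM2l (sqr_ge0 gamma) (sum_similarity_bound w)) _.
  by rewrite mulrA ler_wpM2r // sumr_ge0 // => j _; exact: sqnorm_ge0.
have a1_gt0 : 0 < 1 + a by rewrite ltr_wpDr // ltW // mulr_gt0.
rewrite -(ler_pM2l a1_gt0) -[S *+ n]mulr_natl.
have -> : (1 + a) * (n%:R / (1 + a) * (X + a * S)) = n%:R * X + a * (n%:R * S).
  by field; rewrite gt_eqF.
move: sum_Y G_le; set SY := \sum_i Y i; set N := n%:R => sum_Y G_le.
nra.
Qed.

End PointSAGAStep.

Lemma sum_tuple_cons (V : nmodType) (T : finType) (k : nat) (F : k.+1.-tuple T -> V) :
  \sum_(t : k.+1.-tuple T) F t = \sum_(i : T) \sum_(s : k.-tuple T) F [tuple of i :: s].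
Proof.
rewrite pair_big /=.
pose cons_tuple (p : T * k.-tuple T) := [tuple of p.1 :: p.2].
have cons_bij : bijective cons_tuple.
  exists (fun t => (thead t, [tuple of behead t])).
    by case=> i s; rewrite theadE; congr pair; exact: val_inj.
  by move=> t; rewrite [RHS]tuple_eta; apply: val_inj.
by rewrite (reindex cons_tuple) //; exact: onW_bij.
Qed.

Lemma Psi_ge0 (R : realType) (d n : nat) (gamma mu : R) (xs : 'rV[R]_d)
    (st : 'rV[R]_d * ('I_n -> 'rV[R]_d)) :
  0 <= gamma * mu -> 0 <= Psi gamma mu xs st.
Proof.
move=> gamma_mu_ge0; rewrite /Psi addr_ge0 ?sqnorm_ge0 // mulr_ge0 //.
by rewrite sumr_ge0 // => i _; exact: sqnorm_ge0.
Qed.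

Section ExpectedPsi.
Variables (R : realType) (d n : nat) (fs : 'I_n -> 'rV[R]_d -> R^o).
Variables (gamma mu rho : R) (xs : 'rV[R]_d).
Notation vec := 'rV[R]_d.
Hypotheses (n_gt0 : (0 < n)%N) (rho_ge0 : 0 <= rho).
Hypothesis Psi_step_mean : forall st : vec * ('I_n -> vec),
  \sum_(i < n) Psi gamma mu xs (psaga_step fs gamma st i) <= n%:R * rho * Psi gamma mu xs st.

Lemma expected_Psi_S k (x : vec) (w : 'I_n -> vec) :
  expected_Psi fs gamma mu xs x w k.+1 = n%:R^-1 * \sum_(i < n)
    expected_Psi fs gamma mu xs (psaga_step fs gamma (x, w) i).1
                                (psaga_step fs gamma (x, w) i).2 k.
Proof.
by rewrite /expected_Psi sum_tuple_cons exprS invfM -mulrA mulr_sumr.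
Qed.

Lemma expected_Psi_le_geometric k (x : vec) (w : 'I_n -> vec) :
  expected_Psi fs gamma mu xs x w k <= rho ^+ k * Psi gamma mu xs (x, w).
Proof.
elim: k x w => [|k IH] x w.
  rewrite /expected_Psi !expr0 invr1 !mul1r.
  rewrite (eq_bigr (fun=> Psi gamma mu xs (x, w))) => [|s _]; last by rewrite (tuple0 s).
  by rewrite sumr_const card_tuple card_ord expn0.
have n_R_gt0 : 0 < n%:R :> R by rewrite ltr0n.
have sum_le : \sum_(i < n) expected_Psi fs gamma mu xs (psaga_step fs gamma (x, w) i).1
                                  (psaga_step fs gamma (x, w) i).2 k
    <= \sum_(i < n) rho ^+ k * Psi gamma mu xs (psaga_step fs gamma (x, w) i).
  by apply: ler_sum => i _; exact: IH.
rewrite expected_Psi_S; apply: le_trans (ler_wpM2l _ sum_le) _.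
  by rewrite invr_ge0 ltW.
rewrite -mulr_sumr mulrCA exprSr -mulrA ler_wpM2l ?exprn_ge0 //.
by rewrite ler_pdivrMl // mulrA; exact: Psi_step_mean.
Qed.

End ExpectedPsi.

Lemma geometric_le_of_ln_bound (R : realType) (rho q P eps : R) (K : nat) :
  0 < q -> 0 <= rho -> rho <= 1 - q -> 0 <= P -> 0 < eps ->
  q^-1 * ln (P / eps) <= K%:R -> rho ^+ K * P <= eps.
Proof.
move=> q_gt0 rho_ge0 rho_le P_ge0 eps_gt0 K_large.
have [->|P_neq0] := eqVneq P 0; first by rewrite mulr0 ltW.
have P_gt0 : 0 < P by rewrite lt_neqAle eq_sym P_neq0.
rewrite ler_pdivrMl // in K_large.
have rho_exp : rho ^+ K <= expR (- (q * K%:R)).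
  rewrite mulrC -mulrN expRM_natl lerXn2r ?nnegrE ?expR_ge0 //.
  by apply: le_trans rho_le _; exact: expR_ge1Dx.
have exp_le : expR (- (q * K%:R)) <= eps / P.
  rewrite -[eps / P]invf_div -[P / eps]lnK ?posrE ?divr_gt0 // -expRN.
  by rewrite ler_expR lerN2.
by rewrite -ler_pdivlMr //; exact: le_trans rho_exp exp_le.
Qed.

Section StepSize.
Variables (R : realType) (mu nu N : R).
Hypotheses (mu_gt0 : 0 < mu) (nu_gt0 : 0 < nu) (N_ge1 : 1 <= N).

Let A := nu ^+ 2 / mu ^+ 2 + (N - 1).
Let gamma := (nu ^+ 2 / mu + (N - 1) * mu)^-1.

Let A_gt0 : 0 < A.
Proof. by rewrite ltr_wpDr ?subr_ge0 // divr_gt0 // exprn_gt0. Qed.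

Let denom_gt0 : 0 < nu ^+ 2 + (N - 1) * mu ^+ 2.
Proof. by rewrite -[0]addr0 ltr_leD ?exprn_gt0 // mulr_ge0 ?subr_ge0 ?sqr_ge0. Qed.

Lemma stepsize_gt0 : 0 < gamma.
Proof.
by rewrite invr_gt0 ltr_wpDr ?divr_gt0 ?exprn_gt0 // mulr_ge0 ?subr_ge0 // ltW.
Qed.

Lemma stepsize_mul_mu : gamma * mu = A^-1.
Proof. by rewrite /gamma /A; field; rewrite !gt_eqF. Qed.

Lemma stepsize_sqr_mul_nu :
  gamma ^+ 2 * nu ^+ 2 = gamma * mu - (gamma * mu) ^+ 2 * (N - 1).
Proof.
have -> : gamma = A^-1 / mu by rewrite -stepsize_mul_mu mulfK ?gt_eqF.
by rewrite /A; field; rewrite !gt_eqF.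
Qed.

Lemma stepsize_rate : (1 + gamma * mu)^-1 = 1 - (N + nu ^+ 2 / mu ^+ 2)^-1.
Proof.
have denom'_gt0 : 0 < N * mu ^+ 2 + nu ^+ 2.
  by rewrite ltr_wpDl ?exprn_gt0 // mulr_ge0 ?sqr_ge0 // (le_trans ler01).
by rewrite stepsize_mul_mu /A; field; rewrite !gt_eqF.
Qed.

End StepSize.

Local Close Scope classical_set_scope.
Unset Implicit Arguments.

Theorem mainTheorem13 (R : realType) (d n : nat)
  (fs : 'I_n -> 'rV[R]_d -> R^o) (mu nu : R) (xs : 'rV[R]_d)
  (x0 : 'rV[R]_d) (w0 : 'I_n -> 'rV[R]_d) (eps : R) :
  (0 < n)%N ->
  0 < mu -> 0 < nu ->
  (forall i x, differentiable (fs i) x) ->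
  (forall i, strongly_convex mu (fs i)) ->
  (forall x : 'rV[R]_d,
     n%:R^-1 * \sum_(i < n) fs i xs <= n%:R^-1 * \sum_(i < n) fs i x) ->
  (forall w : 'I_n -> 'rV[R]_d,
     n%:R^-1 * \sum_(j < n)
        sqnorm (grad (fs j) (w j) - n%:R^-1 *: \sum_(i < n) grad (fs i) (w i)
                - grad (fs j) xs)
     <= nu ^+ 2 * (n%:R^-1 * \sum_(j < n) sqnorm (w j - xs))) ->
  0 < eps ->
  let gamma := (nu ^+ 2 / mu + (n%:R - 1) * mu)^-1 in
  forall k : nat,
    (n%:R + nu ^+ 2 / mu ^+ 2) * ln (Psi gamma mu xs (x0, w0) / eps) <= k%:R ->
    expected_Psi fs gamma mu xs x0 w0 k <= eps.
Proof.
move=> n_gt0 mu_gt0 nu_gt0 fs_diff fs_sc _ similarity eps_gt0 gamma k k_large.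
have n_ge1 : 1 <= n%:R :> R by rewrite ler1n.
have gamma_gt0 : 0 < gamma := stepsize_gt0 mu_gt0 nu_gt0 n_ge1.
have gamma_mu_gt0 : 0 < gamma * mu by rewrite mulr_gt0.
have rho_ge0 : 0 <= (1 + gamma * mu)^-1 by rewrite invr_ge0 addr_ge0 ?ltW.
have gamma_small : gamma ^+ 2 * nu ^+ 2 <= gamma * mu - (gamma * mu) ^+ 2 * (n%:R - 1).
  by rewrite (stepsize_sqr_mul_nu mu_gt0 nu_gt0 n_ge1).
have step_mean :=
  psaga_step_mean_Psi n_gt0 mu_gt0 gamma_gt0 fs_sc fs_diff similarity gamma_small.
apply: le_trans (expected_Psi_le_geometric n_gt0 rho_ge0 step_mean k x0 w0) _.
apply: (geometric_le_of_ln_bound (q := (n%:R + nu ^+ 2 / mu ^+ 2)^-1)) => //.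
- by rewrite invr_gt0 ltr_wpDr ?divr_ge0 ?sqr_ge0 // (lt_le_trans ltr01).
- by rewrite (stepsize_rate mu_gt0 nu_gt0 n_ge1).
- exact: Psi_ge0 (ltW gamma_mu_gt0).
- by rewrite invrK.
Qed.
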